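(* Let $v>1$ and consider the plane with two highways $H_x$ (the $x$-axis) and $H_y$ (the $y$-axis) in the $L_1$-metric travel model described in the context. Let $p=(x_p,y_p)$ and $q=(x_q,y_q)$ be two points in the closed first quadrant that both lie on $\mathrm{Side}\text{-}H_x$, i.e. $x_p\ge y_p\ge 0$ and $x_q\ge y_q\ge 0$. Then the time-distance $d(p,q)$ is attained by a path that uses at most one highway, namely $H_x$: either a path that uses no highway at all (so $d(p,q)=|x_p-x_q|+|y_p-y_q|$), or a path that enters $H_x$ once, travels along $H_x$, and leaves $H_x$ once, without using $H_y$. The symmetric statement (with the roles of $x$ and $y$, and of $H_x$ and $H_y$, exchanged) holds for two points on $\mathrm{Side}\text{-}H_y$, i.e. with $y\ge x\ge 0$.
   Context: Travel model: the highways are $H_x=\{(x,0)\}$ and $H_y=\{(0,y)\}$. A path is a rectifiable curve in $\mathbb{R}^2$; its travel time is the $L_1$-length of its portions lying off the highways (speed $1$) plus $1/v$ times the $L_1$-length of its portions travelling along a highway (speed $v>1$). The time-distance $d(p,q)$ is the minimum travel time over all paths from $p$ to $q$; a path attaining it is a shortest time-path, and it ''uses a highway'' $H$ if it travels along a segment of positive length of $H$. The line $x=y$ splits the first quadrant into $\mathrm{Side}\text{-}H_x=\{x\ge y\}$ (the part closer to $H_x$) and $\mathrm{Side}\text{-}H_y=\{x<y\}$ (the part closer to $H_y$). *)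

From Stdlib Require Import Reals Lra List.
Import ListNotations.
Open Scope R_scope.

Definition pt : Type := (R * R)%type.

Definition l1 (a b : pt) : R := Rabs (fst a - fst b) + Rabs (snd a - snd b).

Definition on_Hx (a : pt) : Prop := snd a = 0.
Definition on_Hy (a : pt) : Prop := fst a = 0.

Definition Req_b (x y : R) : bool := if Req_EM_T x y then true else false.

(* A straight segment [a,b] lies in a highway iff both endpoints lie on the
   same highway (a segment containing a positive-length piece of an axis lies
   on that axis). Such a segment is travelled at speed v; otherwise at speed 1
   (meeting a highway in at most one point does not count as using it). *)
Definition seg_in_Hx (a b : pt) : bool := andb (Req_b (snd a) 0) (Req_b (snd b) 0).
Definition seg_in_Hy (a b : pt) : bool := andb (Req_b (fst a) 0) (Req_b (fst b) 0).

Definition seg_time (v : R) (a b : pt) : R :=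
  if orb (seg_in_Hx a b) (seg_in_Hy a b) then l1 a b / v else l1 a b.

Fixpoint poly_time (v : R) (a : pt) (l : list pt) : R :=
  match l with
  | [] => 0
  | b :: l' => seg_time v a b + poly_time v b l'
  end.

Definition travel_time (v : R) (p : pt) (m : list pt) (q : pt) : R :=
  poly_time v p (m ++ [q]).

(* m describes a shortest time-path from p to q: its travel time is minimal
   among all paths from p to q (so it equals d(p,q)). *)
Definition shortest_time_path (v : R) (p : pt) (m : list pt) (q : pt) : Prop :=
  forall m' : list pt, travel_time v p m q <= travel_time v p m' q.

Fixpoint poly_uses_Hx (a : pt) (l : list pt) : Prop :=
  match l with
  | [] => False
  | b :: l' => (a <> b /\ on_Hx a /\ on_Hx b) \/ poly_uses_Hx b l'
  end.
Fixpoint poly_uses_Hy (a : pt) (l : list pt) : Prop :=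
  match l with
  | [] => False
  | b :: l' => (a <> b /\ on_Hy a /\ on_Hy b) \/ poly_uses_Hy b l'
  end.

Definition uses_Hx (p : pt) (m : list pt) (q : pt) : Prop := poly_uses_Hx p (m ++ [q]).
Definition uses_Hy (p : pt) (m : list pt) (q : pt) : Prop := poly_uses_Hy p (m ++ [q]).

Definition side_Hx (a : pt) : Prop := 0 <= snd a <= fst a.
Definition side_Hy (a : pt) : Prop := 0 <= fst a <= snd a.

From Stdlib Require Import Reals List Lra.
Import ListNotations.
Open Scope R_scope.

(** The time from a point [a] to [q] is bounded below by the minimum [R(a)] of
    the travel times of five explicit routes: the direct one, and the ones that
    reach [q] from [H_x] (resp. [H_y]) after entering that highway either
    directly from [a] or through the other highway and the origin.  [R]
    decreases by at most the time of any single segment (the L1 triangle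
    inequality off the highways; on a highway, [R] restricted to it is the
    minimum of two routes that can absorb the segment at speed [v]), hence [R(p)]
    bounds the time of every polygonal path from [p] to [q].  When [p] and [q]
    lie on Side-[H_x], the three routes touching [H_y] are never faster than the
    route along [H_x] alone, so [R(p)] is the time of the direct path or of the
    path along [H_x]; one of these is therefore shortest.  Side-[H_y] follows by
    exchanging the coordinates. *)

Definition swap (a : pt) : pt := (snd a, fst a).

Lemma swap_involutive a : swap (swap a) = a.
Proof. destruct a; reflexivity. Qed.

Lemma map_swap_involutive l : map swap (map swap l) = l.
Proof.
  induction l as [|a l IH]; simpl; [reflexivity|].
  rewrite swap_involutive, IH; reflexivity.
Qed.

Lemma swap_eq a b : swap a = swap b <-> a = b.
Proof.
  split; intros E; [|subst; reflexivity].
  rewrite <- (swap_involutive a), E; apply swap_involutive.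
Qed.

Lemma l1_swap a b : l1 (swap a) (swap b) = l1 a b.
Proof. unfold l1; simpl; ring. Qed.

Lemma l1_refl a : l1 a a = 0.
Proof. unfold l1; rewrite !Rminus_diag, Rabs_R0; ring. Qed.

Lemma Req_b_true x y : Req_b x y = true -> x = y.
Proof. unfold Req_b; destruct Req_EM_T; congruence. Qed.

Lemma Req_b_refl x : Req_b x x = true.
Proof. unfold Req_b; destruct Req_EM_T; congruence. Qed.

Lemma seg_in_Hx_on_Hx a b : seg_in_Hx a b = true -> on_Hx a /\ on_Hx b.
Proof.
  unfold seg_in_Hx, on_Hx; intros H.
  apply andb_prop in H as [Ha Hb]; split; apply Req_b_true; assumption.
Qed.

Lemma Rmin_le_add_compat c x y x' y' :
  x <= c + x' -> y <= c + y' -> Rmin x y <= c + Rmin x' y'.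
Proof. unfold Rmin; repeat destruct Rle_dec; lra. Qed.

Lemma Rabs_triang3 x y z : Rabs (x - z) <= Rabs (x - y) + Rabs (y - z).
Proof. exact (Rdist_tri x z y). Qed.

Lemma l1_triang a b q : l1 a q <= l1 a b + l1 b q.
Proof.
  unfold l1.
  pose proof (Rabs_triang3 (fst a) (fst b) (fst q)).
  pose proof (Rabs_triang3 (snd a) (snd b) (snd q)).
  lra.
Qed.

Section Swap.
Variable v : R.

Lemma seg_time_swap a b : seg_time v (swap a) (swap b) = seg_time v a b.
Proof.
  unfold seg_time; rewrite l1_swap.
  change (seg_in_Hx (swap a) (swap b)) with (seg_in_Hy a b).
  change (seg_in_Hy (swap a) (swap b)) with (seg_in_Hx a b).
  rewrite Bool.orb_comm; reflexivity.
Qed.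

Lemma poly_time_swap a l : poly_time v (swap a) (map swap l) = poly_time v a l.
Proof.
  revert a; induction l as [|b l IH]; intros a; simpl; [reflexivity|].
  rewrite seg_time_swap, IH; reflexivity.
Qed.

Lemma travel_time_swap p m q :
  travel_time v (swap p) (map swap m) (swap q) = travel_time v p m q.
Proof.
  unfold travel_time; change [swap q] with (map swap [q]).
  rewrite <- map_app; apply poly_time_swap.
Qed.

Lemma shortest_time_path_swap p m q :
  shortest_time_path v p m q -> shortest_time_path v (swap p) (map swap m) (swap q).
Proof.
  intros Hm m'.
  rewrite travel_time_swap, <- (map_swap_involutive m'), travel_time_swap.
  apply Hm.
Qed.

End Swap.

Lemma poly_uses_Hx_swap a l : poly_uses_Hx (swap a) (map swap l) <-> poly_uses_Hy a l.
Proof.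
  revert a; induction l as [|b l IH]; intros a; simpl; [tauto|].
  rewrite IH, swap_eq; unfold on_Hx, on_Hy; simpl; tauto.
Qed.

Lemma poly_uses_Hy_swap a l : poly_uses_Hy (swap a) (map swap l) <-> poly_uses_Hx a l.
Proof.
  rewrite <- poly_uses_Hx_swap, swap_involutive, map_swap_involutive; reflexivity.
Qed.

Lemma uses_Hx_swap p m q : uses_Hx (swap p) (map swap m) (swap q) <-> uses_Hy p m q.
Proof.
  unfold uses_Hx, uses_Hy; change [swap q] with (map swap [q]).
  rewrite <- map_app; apply poly_uses_Hx_swap.
Qed.

Lemma uses_Hy_swap p m q : uses_Hy (swap p) (map swap m) (swap q) <-> uses_Hx p m q.
Proof.
  unfold uses_Hx, uses_Hy; change [swap q] with (map swap [q]).
  rewrite <- map_app; apply poly_uses_Hy_swap.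
Qed.

Section Routes.
Variable v : R.
Hypothesis hv : 1 < v.

Lemma div_le_self x : 0 <= x -> x / v <= x.
Proof.
  intros Hx; apply Rmult_le_reg_r with v; [lra|].
  unfold Rdiv; rewrite Rmult_assoc, Rinv_l by lra; nra.
Qed.

Lemma Rabs_div_le x : Rabs x / v <= Rabs x.
Proof. apply div_le_self, Rabs_pos. Qed.

Lemma Rabs_triang3_div x y z : Rabs (x - z) / v <= Rabs (x - y) / v + Rabs (y - z) / v.
Proof.
  unfold Rdiv; rewrite <- Rmult_plus_distr_r.
  apply Rmult_le_compat_r; [left; apply Rinv_0_lt_compat; lra | apply Rabs_triang3].
Qed.

Lemma Rabs_triang_div x y : Rabs x / v <= Rabs (x - y) / v + Rabs y / v.
Proof. pose proof (Rabs_triang3_div x y 0) as H; rewrite !Rminus_0_r in H; exact H. Qed.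

Lemma Rabs_sub_div_le x y : Rabs (x - y) / v <= Rabs x / v + Rabs y / v.
Proof.
  pose proof (Rabs_triang3_div x 0 y) as H.
  rewrite Rminus_0_r, Rminus_0_l, Rabs_Ropp in H; exact H.
Qed.

Lemma div_le_shift x y : y <= x -> y + x / v <= x + y / v.
Proof. intros Hyx; pose proof (div_le_self (x - y)); lra. Qed.

Definition via_Hx_time (a q : pt) : R :=
  Rabs (snd a) + Rabs (fst a - fst q) / v + Rabs (snd q).

Definition via_Hy_Hx_time (a q : pt) : R :=
  Rabs (fst a) + Rabs (snd a) / v + Rabs (fst q) / v + Rabs (snd q).

Definition exit_Hx_time (a q : pt) : R := Rmin (via_Hx_time a q) (via_Hy_Hx_time a q).

(* The swapped term covers the two routes that reach [q] from [H_y]. *)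
Definition best_route_time (a q : pt) : R :=
  Rmin (l1 a q) (Rmin (exit_Hx_time a q) (exit_Hx_time (swap a) (swap q))).

Lemma best_route_time_swap a q : best_route_time (swap a) (swap q) = best_route_time a q.
Proof.
  unfold best_route_time; rewrite l1_swap, !swap_involutive, (Rmin_comm (exit_Hx_time a q)).
  reflexivity.
Qed.

Lemma via_Hx_time_lipschitz a b q : via_Hx_time a q <= l1 a b + via_Hx_time b q.
Proof.
  unfold via_Hx_time, l1.
  pose proof (Rabs_triang_inv (snd a) (snd b)).
  pose proof (Rabs_triang3_div (fst a) (fst b) (fst q)).
  pose proof (Rabs_div_le (fst a - fst b)).
  lra.
Qed.

Lemma via_Hy_Hx_time_lipschitz a b q : via_Hy_Hx_time a q <= l1 a b + via_Hy_Hx_time b q.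
Proof.
  unfold via_Hy_Hx_time, l1.
  pose proof (Rabs_triang_inv (fst a) (fst b)).
  pose proof (Rabs_triang_div (snd a) (snd b)).
  pose proof (Rabs_div_le (snd a - snd b)).
  lra.
Qed.

Lemma exit_Hx_time_lipschitz a b q : exit_Hx_time a q <= l1 a b + exit_Hx_time b q.
Proof.
  apply Rmin_le_add_compat; [apply via_Hx_time_lipschitz | apply via_Hy_Hx_time_lipschitz].
Qed.

Lemma best_route_time_lipschitz a b q : best_route_time a q <= l1 a b + best_route_time b q.
Proof.
  apply Rmin_le_add_compat; [apply l1_triang | apply Rmin_le_add_compat].
  - apply exit_Hx_time_lipschitz.
  - rewrite <- (l1_swap a b); apply exit_Hx_time_lipschitz.
Qed.

Lemma best_route_time_on_Hx a q : on_Hx a ->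
  best_route_time a q = Rmin (via_Hx_time a q) (via_Hy_Hx_time (swap a) (swap q)).
Proof.
  destruct a as [ax ay], q as [qx qy]; unfold on_Hx; simpl; intros ->.
  pose proof (Rabs_div_le (ax - qx)).
  pose proof (Rabs_sub_div_le ax qx).
  pose proof (Rabs_div_le ax).
  pose proof (Rabs_div_le qx).
  unfold best_route_time, exit_Hx_time, via_Hx_time, via_Hy_Hx_time, l1; simpl.
  rewrite Rminus_0_l, Rabs_Ropp, Rabs_R0, Rdiv_0_l.
  unfold Rmin; repeat destruct Rle_dec; lra.
Qed.

Lemma best_route_time_Hx_step a b q : on_Hx a -> on_Hx b ->
  best_route_time a q <= l1 a b / v + best_route_time b q.
Proof.
  intros Ha Hb; rewrite (best_route_time_on_Hx a), (best_route_time_on_Hx b) by assumption.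
  destruct a as [ax ay], b as [bx b_y]; unfold on_Hx in *; simpl in *; subst.
  unfold via_Hx_time, via_Hy_Hx_time, l1; simpl.
  rewrite Rminus_diag, Rabs_R0, Rplus_0_r.
  pose proof (Rabs_triang3_div ax bx (fst q)).
  pose proof (Rabs_triang_div ax bx).
  apply Rmin_le_add_compat; lra.
Qed.

Lemma best_route_time_seg_step a b q :
  best_route_time a q <= seg_time v a b + best_route_time b q.
Proof.
  unfold seg_time.
  destruct (seg_in_Hx a b) eqn:Hx; [|destruct (seg_in_Hy a b) eqn:Hy]; simpl.
  - apply seg_in_Hx_on_Hx in Hx as [Ha Hb].
    apply best_route_time_Hx_step; assumption.
  - change (seg_in_Hx (swap a) (swap b) = true) in Hy.
    apply seg_in_Hx_on_Hx in Hy as [Ha Hb].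
    rewrite <- (best_route_time_swap a q), <- (best_route_time_swap b q), <- l1_swap.
    apply best_route_time_Hx_step; assumption.
  - apply best_route_time_lipschitz.
Qed.

Lemma best_route_time_le_travel_time p m q : best_route_time p q <= travel_time v p m q.
Proof.
  unfold travel_time; revert p; induction m as [|b m IH]; intros p; simpl.
  - pose proof (best_route_time_seg_step p q q).
    pose proof (Rmin_l (l1 q q) (Rmin (exit_Hx_time q q) (exit_Hx_time (swap q) (swap q)))).
    fold (best_route_time q q) in *; rewrite l1_refl in *; lra.
  - pose proof (best_route_time_seg_step p b q); pose proof (IH b); lra.
Qed.

Lemma best_route_time_side_Hx p q : side_Hx p -> side_Hx q ->
  best_route_time p q = Rmin (l1 p q) (via_Hx_time p q).
Proof.
  destruct p as [px py], q as [qx qy]; unfold side_Hx; simpl; intros Hp Hq.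
  pose proof (Rabs_triang3_div px py qx).
  pose proof (Rabs_triang3_div py qy qx).
  pose proof (Rabs_div_le (px - py)).
  pose proof (Rabs_div_le (qy - qx)).
  pose proof (Rabs_sub_div_le px qx).
  pose proof (div_le_shift px py (proj2 Hp)).
  pose proof (div_le_shift qx qy (proj2 Hq)).
  rewrite (Rabs_pos_eq (px - py)), (Rabs_left1 (qy - qx)) in * by lra.
  unfold best_route_time, exit_Hx_time, via_Hx_time, via_Hy_Hx_time; simpl.
  rewrite (Rabs_pos_eq px), (Rabs_pos_eq py), (Rabs_pos_eq qx), (Rabs_pos_eq qy) in * by lra.
  unfold Rmin; repeat destruct Rle_dec; lra.
Qed.

Lemma seg_time_le_l1 a b : seg_time v a b <= l1 a b.
Proof.
  unfold seg_time; destruct orb; [|lra].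
  apply div_le_self; unfold l1.
  pose proof (Rabs_pos (fst a - fst b)); pose proof (Rabs_pos (snd a - snd b)); lra.
Qed.

Lemma seg_time_Hx x y : seg_time v (x, 0) (y, 0) = Rabs (x - y) / v.
Proof.
  unfold seg_time, seg_in_Hx, l1; cbn [fst snd].
  rewrite Req_b_refl, Rminus_diag, Rabs_R0, Rplus_0_r; reflexivity.
Qed.

Definition via_Hx_path (p q : pt) : list pt := [(fst p, 0); (fst q, 0)].

Lemma travel_time_direct_le p q : travel_time v p [] q <= l1 p q.
Proof. unfold travel_time; simpl; rewrite Rplus_0_r; apply seg_time_le_l1. Qed.

Lemma travel_time_via_Hx_le p q : travel_time v p (via_Hx_path p q) q <= via_Hx_time p q.
Proof.
  destruct p as [px py], q as [qx qy].
  unfold travel_time, via_Hx_path, via_Hx_time; cbn [app poly_time fst snd].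
  rewrite seg_time_Hx.
  pose proof (seg_time_le_l1 (px, py) (px, 0)).
  pose proof (seg_time_le_l1 (qx, 0) (qx, qy)).
  unfold l1 in *; cbn [fst snd] in *.
  rewrite Rminus_diag, Rabs_R0, Rminus_0_r, Rminus_0_l, Rabs_Ropp in *.
  lra.
Qed.

Lemma travel_time_via_Hx_on_Hx p q : on_Hx p -> on_Hx q ->
  travel_time v p (via_Hx_path p q) q = travel_time v p [] q.
Proof.
  destruct p as [px py], q as [qx qy]; unfold on_Hx; simpl; intros -> ->.
  unfold travel_time, via_Hx_path; cbn [app poly_time fst].
  rewrite !seg_time_Hx, !Rminus_diag, Rabs_R0, Rdiv_0_l; ring.
Qed.

Lemma side_Hx_on_Hy a : side_Hx a -> on_Hy a -> a = (0, 0).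
Proof.
  destruct a as [x y]; unfold side_Hx, on_Hy; simpl; intros H ->.
  f_equal; lra.
Qed.

Lemma direct_not_uses_Hy p q : side_Hx p -> side_Hx q -> ~ uses_Hy p [] q.
Proof.
  intros Hp Hq [[Hne [Ep Eq]] | []].
  apply Hne; rewrite (side_Hx_on_Hy p), (side_Hx_on_Hy q); auto.
Qed.

Lemma via_Hx_not_uses_Hy p q : side_Hx p -> side_Hx q -> ~ uses_Hy p (via_Hx_path p q) q.
Proof.
  destruct p as [px py], q as [qx qy]; unfold side_Hx, uses_Hy, via_Hx_path; simpl.
  unfold on_Hy; simpl.
  intros Hp Hq [[Hne [E _]] | [[Hne [E E']] | [[Hne [_ E]] | []]]];
    apply Hne; f_equal; lra.
Qed.

Lemma side_Hx_shortest_path p q : side_Hx p -> side_Hx q ->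
  exists m : list pt,
    shortest_time_path v p m q /\ ~ uses_Hy p m q /\
    (~ uses_Hx p m q \/ exists a b : R, m = [(a, 0); (b, 0)]).
Proof.
  intros Hp Hq.
  pose proof (travel_time_direct_le p q) as Hdirect.
  pose proof (travel_time_via_Hx_le p q) as Hvia.
  pose proof (travel_time_via_Hx_on_Hx p q) as Hdegenerate.
  set (direct := travel_time v p [] q) in *.
  set (via := travel_time v p (via_Hx_path p q) q) in *.
  assert (Hlow : forall m', Rmin direct via <= travel_time v p m' q).
  { intros m'; eapply Rle_trans; [|apply best_route_time_le_travel_time].
    rewrite best_route_time_side_Hx by assumption.
    unfold Rmin; repeat destruct Rle_dec; lra. }
  destruct (Rle_lt_dec via direct) as [Hle | Hlt].
  - exists (via_Hx_path p q); split; [|split].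
    + intros m'; specialize (Hlow m'); rewrite Rmin_right in Hlow by exact Hle; exact Hlow.
    + apply via_Hx_not_uses_Hy; assumption.
    + right; exists (fst p), (fst q); reflexivity.
  - exists []; split; [|split].
    + intros m'; specialize (Hlow m'); rewrite Rmin_left in Hlow by lra; exact Hlow.
    + apply direct_not_uses_Hy; assumption.
    + left; intros [[_ [Ep Eq]] | []].
      specialize (Hdegenerate Ep Eq); lra.
Qed.

Lemma side_Hy_shortest_path p q : side_Hy p -> side_Hy q ->
  exists m : list pt,
    shortest_time_path v p m q /\ ~ uses_Hx p m q /\
    (~ uses_Hy p m q \/ exists a b : R, m = [(0, a); (0, b)]).
Proof.
  intros Hp Hq.
  destruct (side_Hx_shortest_path (swap p) (swap q) Hp Hq) as (m & Hm & Hnot & Halt).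
  exists (map swap m).
  rewrite <- (swap_involutive p), <- (swap_involutive q).
  split; [apply shortest_time_path_swap, Hm|].
  rewrite uses_Hx_swap, uses_Hy_swap; split; [exact Hnot|].
  destruct Halt as [H | (a & b & ->)]; [left; exact H | right; exists a, b; reflexivity].
Qed.

End Routes.

Theorem mainTheorem1 (v : R) (hv : 1 < v) :
  (forall p q : pt, side_Hx p -> side_Hx q ->
     exists m : list pt,
       shortest_time_path v p m q /\ ~ uses_Hy p m q /\
       (~ uses_Hx p m q \/ exists a b : R, m = [(a, 0); (b, 0)])) /\
  (forall p q : pt, side_Hy p -> side_Hy q ->
     exists m : list pt,
       shortest_time_path v p m q /\ ~ uses_Hx p m q /\
       (~ uses_Hy p m q \/ exists a b : R, m = [(0, a); (0, b)])).
Proof.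
  split; [exact (side_Hx_shortest_path v hv) | exact (side_Hy_shortest_path v hv)].
Qed.
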